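(* Let $H$ be a multigraph of even order $p\ge 4$ and let $d\ge 2$ be an integer. Suppose there is a vertex $s$ with $\deg(s)\le d$, every other vertex has degree $d$ or $d+1$, and exactly $r \le d$ vertices have degree $d+1$. Suppose there exists $R \subsetneq V(H)\setminus\{s\}$ with $|R|$ odd, $|R|\ge 3$, $|\partial_H(R)| \le d$ and $\operatorname{sl}(\langle R\rangle, d) \le \operatorname{sl}(H-s, d)$. If $\Gamma(H)\le d+1$, then there is a subset $S\subseteq V(H)$ with $|S|$ odd and $1<|S|<p-1$ such that $\Delta(H_S)\le d+1$, $\Gamma(H_S)\le d+1$, and $H_S$ has at most $r$ vertices of degree $d+1$; and similarly $\Delta(H_{S^c})\le d+1$, $\Gamma(H_{S^c})\le d+1$, and $H_{S^c}$ has at most $r$ vertices of degree $d+1$, where $S^c=V(H)\setminus S$.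
   Context: Multigraphs are finite and loopless, multiple edges allowed. For $S \subseteq V(H)$, $\langle S\rangle$ is the induced subgraph and $\partial_H(S)$ is the set of edges of $H$ with exactly one end in $S$. For a multigraph $K$ of odd order $n(K)\ge 3$ with $e(K)$ edges, $t(K) = 2e(K)/(n(K)-1)$, and the $k$-slack is $\operatorname{sl}(K,k) = (k+1)(n(K)-1)/2 - e(K)$. $\Gamma(H) = \max\{t(\langle R\rangle) : R\subseteq V(H), |R| \text{ odd}, |R|\ge 3\}$. Shrinking: for a nonempty proper subset $S$ of $V(H)$, $H_S$ has vertex set $(V(H)\setminus S)\cup\{s'\}$ for a new vertex $s'$; its edges are the edges of $H - S$ together with, for each $u \notin S$, exactly as many edges $us'$ as there are edges of $H$ joining $u$ to vertices of $S$. *)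

From mathcomp Require Import all_boot all_order all_algebra.
Set Implicit Arguments. Unset Strict Implicit. Unset Printing Implicit Defensive.
Import Order.TTheory GRing.Theory Num.Theory.

(* A finite loopless multigraph on the vertex type T is given by an edge
   multiplicity function m : T -> T -> nat that is symmetric and zero on the
   diagonal.  Subgraphs/auxiliary graphs are described by a vertex set
   V : {set T} together with m (only entries between vertices of V matter). *)
Definition multigraph (T : finType) (m : T -> T -> nat) : Prop :=
  (forall u w, m u w = m w u) /\ (forall u, m u u = 0%N).

Section Params.
Variable T : finType.
Implicit Types (V R S : {set T}) (m : T -> T -> nat).

Definition deg V m (v : T) : nat := \sum_(u in V) m v u.

(* number of edges e(<V>) (each edge counted twice in the double sum) *)
Definition ecount V m : nat := (\sum_(u in V) \sum_(w in V) m u w)./2.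

Definition maxdeg V m : nat := \max_(v in V) deg V m v.

Definition nb_deg V m (k : nat) : nat := #|[set v in V | deg V m v == k]|.

Definition bnd V m R : nat := \sum_(u in R) \sum_(w in V :\: R) m u w.

Definition tK V m : rat := ((2 * ecount V m)%:R / (#|V|.-1)%:R)%R.

Definition slack V m (k : nat) : rat :=
  (((k.+1 * #|V|.-1)%:R / 2%:R) - (ecount V m)%:R)%R.

(* Gamma(H) = max of t(<R>) over R subset of V(H), |R| odd, |R| >= 3
   (the default 0 is irrelevant for the bounds considered). *)
Definition Gam V m : rat :=
  (\big[Num.max/0%R]_(R : {set T} | (R \subset V) && odd #|R| && (2 < #|R|)%N)
     tK R m)%R.
End Params.

(* Shrinking S to a new vertex s' (represented by None); old vertex x is Some x. *)
Definition shrinkV (T : finType) (S : {set T}) : {set option T} :=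
  None |: [set Some x | x in ~: S].

Definition shrinkM (T : finType) (S : {set T}) (m : T -> T -> nat)
  (x y : option T) : nat :=
  match x, y with
  | Some u, Some w => m u w
  | Some u, None => \sum_(w in S) m u w
  | None, Some w => \sum_(u in S) m u w
  | None, None => 0%N
  end.

From mathcomp Require Import all_boot all_order all_algebra zify lra.
Import Order.TTheory GRing.Theory Num.Theory.
Set Implicit Arguments. Unset Strict Implicit. Unset Printing Implicit Defensive.

(* Call Y a candidate if s is not in Y, |Y| is odd and at least 3, |∂Y| <= d,
   and Y satisfies the slack inequality of R; R is one.  Shrinking a candidate
   S keeps all degrees at most d + 1 (the new vertex has degree |∂S| <= d) and
   adds no vertex of degree d + 1; an odd set of H_S that is too dense must
   contain the new vertex, i.e. comes from an even set W outside S that is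
   overfull towards S: 2e(W) + 2e(W, S) > (d + 1)|W|.  Such a W lets us lower
   |∂Y|: remove W from Y when W lies inside Y, add W to Y when W avoids s, and
   otherwise pass to the complement of Y ∪ W, whose boundary is smaller than
   deg s.  A candidate of minimal boundary is thus free of overfull sets on
   both sides, so both S and its complement can be shrunk. *)

Lemma big_setU_disjoint (R : Type) (idx : R) (op : Monoid.com_law idx)
    (I : finType) (A B : {set I}) (F : I -> R) :
  [disjoint A & B] ->
  \big[op/idx]_(i in A :|: B) F i =
    op (\big[op/idx]_(i in A) F i) (\big[op/idx]_(i in B) F i).
Proof. by move=> dAB; rewrite -bigU //; apply: eq_bigl => i; rewrite inE. Qed.

Lemma setC_setU_disjoint (T : finType) (A B : {set T}) :
  [disjoint B & A] -> ~: A = B :|: ~: (A :|: B).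
Proof.
move=> dBA; rewrite setCU setUIr setUCr setIT; apply/esym/setUidPr.
by rewrite -disjoints_subset.
Qed.

Lemma subset_setC1 (T : finType) (A : {set T}) x : (A \subset [set~ x]) = (x \notin A).
Proof. by rewrite -disjoints_subset disjoint_sym disjoints1. Qed.

Lemma big_option_set (T : finType) (W : {set option T}) (F : option T -> nat) :
  \sum_(x in W) F x =
    (None \in W) * F None + \sum_(x in [set x | Some x \in W]) F (Some x).
Proof.
have noneW : W :&: [set None] = if None \in W then [set None] else set0.
  apply/setP => x; rewrite !inE; case: (x =P None) => [->|/eqP xN];
  by case: ifP; rewrite ?inE ?andbT ?andbF ?eqxx ?(negbTE xN).
have someW : W :\: [set None] = Some @: [set x | Some x \in W].
  apply/setP => -[x|]; rewrite !inE; last by apply/esym/imsetP => -[].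
  by rewrite (mem_imset _ _ (@Some_inj _)) inE.
rewrite (big_setID [set None]) noneW someW big_imset /=; last by move=> x y _ _ [].
by case: (None \in W); rewrite ?big_set1 ?big_set0 ?mul1n ?mul0n.
Qed.

Lemma card_option_set (T : finType) (W : {set option T}) :
  #|W| = (None \in W) + #|[set x | Some x \in W]|.
Proof. by rewrite -!sum1_card big_option_set muln1. Qed.

Section Cross.
Variables (T : finType) (m : T -> T -> nat).
Implicit Types (A B C : {set T}).

Definition cross A B : nat := \sum_(u in A) \sum_(w in B) m u w.

Lemma crossUl A B C :
  [disjoint A & B] -> cross (A :|: B) C = cross A C + cross B C.
Proof. exact: big_setU_disjoint. Qed.

Lemma crossUr A B C :
  [disjoint A & B] -> cross C (A :|: B) = cross C A + cross C B.
Proof.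
by move=> dAB; rewrite /cross -big_split; apply: eq_bigr => u _; rewrite big_setU_disjoint.
Qed.

Lemma cross_setC A B : cross A [set: T] = cross A B + cross A (~: B).
Proof. by rewrite -crossUr ?setUCr // disjoints_subset setCK. Qed.

Lemma bnd_setT A : bnd [set: T] m A = cross A (~: A).
Proof. by rewrite /bnd setTD. Qed.

Hypothesis mg : multigraph m.

Lemma cross_sym A B : cross A B = cross B A.
Proof.
by rewrite /cross exchange_big; apply: eq_bigr => u _; apply: eq_bigr => w _; case: mg.
Qed.

Lemma cross_set1 x : cross [set x] [set x] = 0.
Proof. by rewrite /cross !big_set1; case: mg. Qed.

Lemma cut_set1 x : cross [set x] (~: [set x]) = deg [set: T] m x.
Proof. by rewrite -[LHS]add0n -(cross_set1 x) -cross_setC /cross big_set1. Qed.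

Lemma cross_setT_setC1 x :
  cross [set: T] [set: T] = cross [set~ x] [set~ x] + 2 * deg [set: T] m x.
Proof.
have dx : [disjoint [set~ x] & [set x]] by rewrite disjoint_sym disjoints1 setC11.
rewrite -{1}(setUCr [set x]) setUC crossUl // (cross_setC [set~ x] [set~ x]) setCK.
by rewrite (cross_sym [set~ x]) cut_set1 /cross big_set1 -/(deg _ _ _); lia.
Qed.

Lemma odd_cross_diag A : ~~ odd (cross A A).
Proof.
have [n] := ubnP #|A|; elim: n => // n IH in A *; rewrite ltnS => leAn.
have [->|[x xA]] := set_0Vmem A; first by rewrite /cross big_set0.
have dxA : [disjoint [set x] & A :\ x] by rewrite disjoints1 !inE eqxx.
rewrite -(setD1K xA) crossUl // !crossUr // cross_set1 (cross_sym (A :\ x)).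
rewrite add0n addnA addnn !oddD odd_double /= IH //.
by move: leAn; rewrite (cardsD1 x A) xA.
Qed.

Lemma ecountE A : 2 * ecount A m = cross A A.
Proof.
by rewrite /ecount -/(cross A A) mul2n -[RHS]odd_double_half (negbTE (odd_cross_diag A)).
Qed.

End Cross.

Section Shrink.
Variables (T : finType) (m : T -> T -> nat) (S : {set T}).

Lemma shrinkV_None : None \in shrinkV S.
Proof. by rewrite !inE. Qed.

Lemma shrinkV_Some x : (Some x \in shrinkV S) = (x \notin S).
Proof. by rewrite !inE /= (mem_imset _ _ (@Some_inj _)) inE. Qed.

Lemma shrinkV_preim : [set x | Some x \in shrinkV S] = ~: S.
Proof. by apply/setP => x; rewrite inE shrinkV_Some inE. Qed.

Lemma shrink_multigraph : multigraph m -> multigraph (shrinkM S m).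
Proof.
move=> [msym m0]; split=> [[u|] [w|] //=|[u|] //=].
all: by [apply: msym | apply: eq_bigr => v _].
Qed.

Lemma deg_shrinkV_None : deg (shrinkV S) (shrinkM S m) None = bnd [set: T] m S.
Proof.
by rewrite /deg big_option_set shrinkV_None shrinkV_preim bnd_setT /cross exchange_big.
Qed.

Lemma deg_shrinkV_Some x :
  deg (shrinkV S) (shrinkM S m) (Some x) = deg [set: T] m x.
Proof.
by rewrite /deg big_option_set shrinkV_None shrinkV_preim mul1n [RHS](big_setID S) setTI setTD.
Qed.

Lemma cross_shrinkV (W : {set option T}) : multigraph m ->
  let W' := [set x | Some x \in W] in
  cross (shrinkM S m) W W = cross m W' W' + (None \in W) * 2 * cross m W' S.
Proof.
move=> mg W'; rewrite /cross.
under eq_bigr do rewrite big_option_set /=.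
rewrite (big_option_set W) /= -/W' muln0 add0n big_split /= -big_distrr /=.
rewrite exchange_big -!/(cross _ _ _) (cross_sym mg S W').
by case: (None \in W); rewrite ?mul1n ?mul0n //; lia.
Qed.

End Shrink.

Section Gamma.
Variables (T : finType) (m : T -> T -> nat).

Lemma tK_le_nat (V : {set T}) (n : nat) : multigraph m -> (1 < #|V|)%N ->
  (tK V m <= n%:R)%R = (cross m V V <= n * #|V|.-1)%N.
Proof.
move=> mg V2; rewrite /tK ecountE // ler_pdivrMr ?ltr0n; last by lia.
by rewrite -natrM ler_nat.
Qed.

Lemma tK_le_Gam (V R : {set T}) :
  R \subset V -> odd #|R| -> (2 < #|R|)%N -> (tK R m <= Gam V m)%R.
Proof.
by move=> RV oR R3; rewrite /Gam (bigD1 R) ?RV ?oR ?R3 //= le_max lexx.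
Qed.

Lemma Gam_le (V : {set T}) (c : rat) : (0 <= c)%R ->
  (forall R : {set T}, R \subset V -> odd #|R| -> (2 < #|R|)%N -> (tK R m <= c)%R) ->
  (Gam V m <= c)%R.
Proof.
move=> c0 tKc; apply: (big_ind (fun x => x <= c)%R) => // [x y|R /andP[/andP[]]].
  by rewrite ge_max => -> ->.
exact: tKc.
Qed.

End Gamma.

(* [cross m W W] counts each edge of [<W>] twice. *)
Definition overfull (T : finType) (m : T -> T -> nat) (d : nat) (W X : {set T}) :=
  (d.+1 * #|W| < cross m W W + 2 * cross m W X)%N.

(* Exactly the sets [W] whose union with the new vertex [s'] could be too dense. *)
Definition overfull_free (T : finType) (m : T -> T -> nat) (d : nat) (S : {set T}) :=
  forall W : {set T}, W \subset ~: S -> ~~ odd #|W| -> ~~ overfull m d W S.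

Definition shrink_bounded (T : finType) (m : T -> T -> nat) (d r : nat) (S : {set T}) :=
  [/\ (maxdeg (shrinkV S) (shrinkM S m) <= d.+1)%N,
      (Gam (shrinkV S) (shrinkM S m) <= (d.+1)%:R)%R &
      (nb_deg (shrinkV S) (shrinkM S m) d.+1 <= r)%N].

Section ShrinkBounds.
Variables (T : finType) (m : T -> T -> nat) (d : nat) (S : {set T}).
Hypotheses (mg : multigraph m) (deg_le : forall v, (deg [set: T] m v <= d.+1)%N).
Hypothesis cutS : (cross m S (~: S) <= d)%N.

Lemma maxdeg_shrinkV : (maxdeg (shrinkV S) (shrinkM S m) <= d.+1)%N.
Proof.
apply/bigmax_leqP => -[x|] _; first by rewrite deg_shrinkV_Some.
by rewrite deg_shrinkV_None bnd_setT; apply: leqW.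
Qed.

Lemma nb_deg_shrinkV :
  (nb_deg (shrinkV S) (shrinkM S m) d.+1 <= nb_deg [set: T] m d.+1)%N.
Proof.
rewrite /nb_deg -[X in (_ <= X)%N](card_imset _ (@Some_inj _)).
apply: subset_leq_card.
apply/subsetP => -[x|]; rewrite !inE.
  by rewrite deg_shrinkV_Some => /andP[_ dx]; rewrite (mem_imset _ _ (@Some_inj _)) !inE.
by rewrite deg_shrinkV_None bnd_setT => /andP[_ /eqP cutE]; move: cutS; rewrite cutE ltnn.
Qed.

Lemma Gam_shrinkV : (Gam [set: T] m <= (d.+1)%:R)%R -> overfull_free m d S ->
  (Gam (shrinkV S) (shrinkM S m) <= (d.+1)%:R)%R.
Proof.
move=> GamT freeS; apply: Gam_le => // W WS oW W3.
have mgS := shrink_multigraph S mg.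
rewrite tK_le_nat ?cross_shrinkV //; last by lia.
set W' := [set x | Some x \in W].
have W'S : W' \subset ~: S.
  by apply/subsetP => x; rewrite inE => /(subsetP WS); rewrite shrinkV_Some inE.
move: oW W3; rewrite card_option_set -/W'; case: (None \in W) => /= oW' W'3.
  by have := freeS W' W'S oW'; rewrite /overfull -leqNgt mul1n.
rewrite mul0n addn0 -tK_le_nat //; last by lia.
exact: le_trans (tK_le_Gam m (subsetT W') oW' W'3) GamT.
Qed.

End ShrinkBounds.

Lemma shrink_bounded_overfull_free (T : finType) (m : T -> T -> nat) (d : nat)
    (S : {set T}) :
  multigraph m -> (forall v, (deg [set: T] m v <= d.+1)%N) ->
  (Gam [set: T] m <= (d.+1)%:R)%R -> (cross m S (~: S) <= d)%N ->
  overfull_free m d S -> shrink_bounded m d (nb_deg [set: T] m d.+1) S.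
Proof.
move=> mg deg_le GamT cutS freeS; split.
- exact: maxdeg_shrinkV.
- exact: Gam_shrinkV.
- exact: nb_deg_shrinkV.
Qed.

Lemma slack_le_nat (T : finType) (m : T -> T -> nat) (k : nat) (V1 V2 : {set T}) :
  multigraph m -> (slack V1 m k <= slack V2 m k)%R ->
  (k.+1 * #|V1|.-1 + cross m V2 V2 <= k.+1 * #|V2|.-1 + cross m V1 V1)%N.
Proof.
move=> mg; rewrite /slack -!ecountE // -(ler_nat rat) !natrD !natrM.
lra.
Qed.

Section Reduction.
Variables (T : finType) (m : T -> T -> nat) (d : nat) (s : T).
Hypotheses (mg : multigraph m) (deg_le : forall v, (deg [set: T] m v <= d.+1)%N).
Hypothesis deg_ge : forall v, v != s -> (d <= deg [set: T] m v)%N.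

Local Notation cut A := (cross m A (~: A)).

(* The last condition is twice [slack Y m d <= slack [set~ s] m d]. *)
Definition candidate (Y : {set T}) :=
  [/\ Y \proper [set~ s], odd #|Y|, (2 < #|Y|)%N, (cut Y <= d)%N &
      (d.+1 * #|Y|.-1 + cross m [set~ s] [set~ s]
         <= d.+1 * #|[set~ s]|.-1 + cross m Y Y)%N].

Lemma cross_setT_le (A : {set T}) : (cross m A [set: T] <= d.+1 * #|A|)%N.
Proof. by rewrite mulnC -sum_nat_const; apply: leq_sum => v _; apply: deg_le. Qed.

Lemma cross_lt_overfull (W X : {set T}) : [disjoint W & X] -> overfull m d W X ->
  (cross m W (~: (X :|: W)) < cross m W X)%N.
Proof.
rewrite disjoint_sym /overfull => dXW.
have := cross_setT_le W; rewrite (cross_setC m W (X :|: W)) crossUr //; lia.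
Qed.

Lemma card_gt2_cut_lt (Y : {set T}) :
  s \notin Y -> odd #|Y| -> (cut Y < d)%N -> (2 < #|Y|)%N.
Proof.
move=> sY oY cutY; have Y1 : #|Y| != 1%N.
  apply/negP => /cards1P[v Yv]; move: cutY; rewrite Yv cut_set1 // ltnNge deg_ge //.
  by apply: contraNneq sY => <-; rewrite Yv set11.
by move: oY Y1; case: #|Y| => [|[|[]]].
Qed.

Lemma candidate_setD (Y W : {set T}) :
  candidate Y -> W \subset Y -> ~~ odd #|W| -> overfull m d W (~: Y) ->
  candidate (Y :\: W) /\ (cut (Y :\: W) < cut Y)%N.
Proof.
move=> [YVs oY Y2 cutY slY] WY oW ofW; set Y' := Y :\: W.
have dWY : [disjoint W & ~: Y] by rewrite disjoints_subset setCK.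
have dWY' : [disjoint W & Y'] by rewrite disjoint_sym disjoints_subset /Y' setDE subsetIr.
have eY : Y = W :|: Y'.
  by rewrite /Y' setDE setUIr setUCr setIT; apply/esym/setUidPr.
have eY' : ~: (~: Y :|: W) = Y' by rewrite setCU setCK /Y' setDE.
have ltW := cross_lt_overfull dWY ofW; rewrite eY' in ltW.
have degW := cross_setT_le W.
rewrite (cross_setC m W Y) {1}eY crossUr // in degW.
have eC : ~: Y' = W :|: ~: Y by rewrite -eY' setCK setUC.
have cutY' : cut Y' = (cross m Y' W + cross m Y' (~: Y))%N.
  by rewrite eC crossUr // disjoint_sym.
have cutYE : cut Y = (cross m W (~: Y) + cross m Y' (~: Y))%N.
  by rewrite {1}eY crossUl.
have crossYY : cross m Y Y =
    (cross m W W + cross m W Y' + cross m Y' W + cross m Y' Y')%N.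
  by rewrite eY crossUl // !crossUr //; lia.
have cardY : #|Y| = (#|W| + #|Y'|)%N by rewrite eY cardsU disjoint_setI0 // cards0 subn0.
have oY' : odd #|Y'| by move: oY; rewrite cardY oddD (negbTE oW).
have sY : s \notin Y by rewrite -subset_setC1 (proper_sub YVs).
have sY' : s \notin Y' by apply: contra sY; apply/subsetP/subsetDl.
have ltcut : (cut Y' < cut Y)%N by rewrite cutY' cutYE cross_sym //; lia.
split=> //; split=> //.
- exact: sub_proper_trans (subsetDl Y W) YVs.
- by apply: card_gt2_cut_lt => //; lia.
- lia.
- have Y'0 := odd_gt0 oY'.
  have cardY1 : #|Y|.-1 = (#|W| + #|Y'|.-1)%N by lia.
  rewrite cardY1 mulnDr crossYY (cross_sym mg Y' W) in slY; lia.
Qed.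

Lemma cut_disjoint (Y W : {set T}) : [disjoint W & Y] ->
  cut Y = (cross m W Y + cross m Y (~: (Y :|: W)))%N.
Proof.
move=> dWY; rewrite {1}(setC_setU_disjoint dWY) crossUr ?(cross_sym mg Y W) //.
by rewrite disjoints_subset setCK subsetUr.
Qed.

Lemma candidate_setU (Y W : {set T}) :
  candidate Y -> [disjoint W & Y] -> s \notin W -> ~~ odd #|W| -> overfull m d W Y ->
  candidate (Y :|: W) /\ (cut (Y :|: W) < cut Y)%N.
Proof.
move=> [YVs oY Y2 cutY slY] dWY sW oW ofW; set Y' := Y :|: W.
have dYW : [disjoint Y & W] by rewrite disjoint_sym.
have ltW := cross_lt_overfull dWY ofW.
have cutYE := cut_disjoint dWY.
have cutY' : cut Y' = (cross m Y (~: Y') + cross m W (~: Y'))%N.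
  by rewrite crossUl.
have crossY'Y' : cross m Y' Y' =
    (cross m Y Y + cross m Y W + cross m W Y + cross m W W)%N.
  by rewrite crossUl // !crossUr //; lia.
have cardY' : #|Y'| = (#|Y| + #|W|)%N.
  by rewrite cardsU disjoint_setI0 // cards0 subn0.
have slY' : (d.+1 * #|Y'|.-1 + cross m [set~ s] [set~ s]
               < d.+1 * #|[set~ s]|.-1 + cross m Y' Y')%N.
  have cardY'1 : #|Y'|.-1 = (#|Y|.-1 + #|W|)%N by lia.
  move: ofW; rewrite /overfull cardY'1 mulnDr crossY'Y' (cross_sym mg Y W); lia.
have ltcut : (cut Y' < cut Y)%N by rewrite cutY' cutYE /Y'; lia.
split=> //; split; last exact: ltnW.
- rewrite properEneq; apply/andP; split.
    by apply: contraTneq slY' => ->; rewrite ltnn.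
  by rewrite subUset (proper_sub YVs) subset_setC1.
- by rewrite cardY' oddD (negbTE oW) addbF.
- lia.
- lia.
Qed.

Lemma cross_setT_le_setD1 (W : {set T}) : s \in W ->
  (cross m W [set: T] <= d.+1 * #|W|.-1 + deg [set: T] m s)%N.
Proof.
move=> sW; have ds : [disjoint [set s] & W :\ s] by rewrite disjoints1 setD11.
rewrite -{1}(setD1K sW) crossUl // /cross big_set1 -/(deg _ _ _) addnC.
by rewrite leq_add2r (cardsD1 s W) sW; apply: cross_setT_le.
Qed.

Hypothesis even_T : ~~ odd #|T|.

(* The degree of [s] exceeds the cut of [Y :|: W]; this pays for the slack
   inequality when [Y] is replaced by the complement of [Y :|: W]. *)
Lemma cut_setU_lt_deg (Y W : {set T}) :
  (cut Y <= d)%N -> [disjoint W & Y] -> s \in W -> overfull m d W Y ->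
  (cross m Y (~: (Y :|: W)) + cross m W (~: (Y :|: W)) < deg [set: T] m s)%N.
Proof.
move=> cutY dWY sW; rewrite /overfull => ofW.
have dYW : [disjoint Y & W] by rewrite disjoint_sym.
have cutYE := cut_disjoint dWY.
have degW := cross_setT_le_setD1 sW.
rewrite (cross_setC m W (Y :|: W)) crossUr // in degW.
have W0 : (0 < #|W|)%N by apply/card_gt0P; exists s.
have cardW : d.+1 * #|W| = (d.+1 * #|W|.-1 + d.+1)%N by rewrite -mulnSr prednK.
rewrite cardW in ofW; lia.
Qed.

Lemma candidate_setCU (Y W : {set T}) :
  candidate Y -> [disjoint W & Y] -> s \in W -> ~~ odd #|W| -> overfull m d W Y ->
  candidate (~: (Y :|: W)) /\ (cut (~: (Y :|: W)) < cut Y)%N.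
Proof.
move=> [YVs oY Y2 cutY _] dWY sW oW ofW.
have dYW : [disjoint Y & W] by rewrite disjoint_sym.
have ltW := cross_lt_overfull dWY ofW.
have cutYE := cut_disjoint dWY.
have ltdeg := cut_setU_lt_deg cutY dWY sW ofW.
set Z := ~: (Y :|: W) in ltW cutYE ltdeg *.
have cutZ : cut Z = (cross m Y Z + cross m W Z)%N.
  by rewrite setCK crossUr // !(cross_sym mg Z).
have ltcut : (cut Z < cut Y)%N by lia.
have cardT : #|T| = (#|Y| + #|W| + #|Z|)%N.
  by rewrite -(cardsC (Y :|: W)) cardsU disjoint_setI0 // cards0 subn0.
have oZ : odd #|Z| by move: even_T; rewrite cardT !oddD oY (negbTE oW) /= negbK.
have sZ : s \notin Z by rewrite !inE sW orbT.
have crossTT : cross m [set: T] [set: T] =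
    (cross m Y [set: T] + cross m W [set: T] + cross m Z [set: T])%N.
  by rewrite -crossUl // -crossUl /Z ?setUCr // disjoints_subset setCK.
have crossZT : cross m Z [set: T] = (cross m Z Z + cut Z)%N by exact: cross_setC.
have degT := cross_setT_setC1 mg s; rewrite crossTT crossZT in degT.
have degW := cross_setT_le_setD1 sW; have degY := cross_setT_le Y.
have Z0 := odd_gt0 oZ; have W0 : (0 < #|W|)%N by apply/card_gt0P; exists s.
have cardVs1 : #|[set~ s]|.-1 = (#|Y| + #|W|.-1 + #|Z|.-1)%N by rewrite cardsC1; lia.
split=> //; split=> //.
- by rewrite properEcard subset_setC1 sZ cardsC1; lia.
- by apply: card_gt2_cut_lt => //; lia.
- lia.
- by rewrite cardVs1 !mulnDr; lia.
Qed.

Lemma candidate_overfull_free (Y : {set T}) : candidate Y ->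
  exists S, [/\ candidate S, overfull_free m d S & overfull_free m d (~: S)].
Proof.
have [n] := ubnP (cut Y); elim: n => // n IH in Y *; rewrite ltnS => cutYn cY.
have next Y' : candidate Y' /\ (cut Y' < cut Y)%N -> exists S,
    [/\ candidate S, overfull_free m d S & overfull_free m d (~: S)].
  by move=> [cY' ltY']; apply: IH cY'; apply: leq_trans cutYn.
case: (boolP [exists W : {set T}, [&& W \subset ~: Y, ~~ odd #|W| & overfull m d W Y]])
  => [/existsP[W /and3P[WY oW ofW]]|/existsPn freeY].
  rewrite -disjoints_subset in WY.
  case: (boolP (s \in W)) => sW.
    exact: next (candidate_setCU cY WY sW oW ofW).
  exact: next (candidate_setU cY WY sW oW ofW).
case: (boolP [exists W : {set T},
               [&& W \subset ~: ~: Y, ~~ odd #|W| & overfull m d W (~: Y)]])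
  => [/existsP[W /and3P[WY oW ofW]]|/existsPn freeCY].
  by rewrite setCK in WY; exact: next (candidate_setD cY WY oW ofW).
by exists Y; split=> // W WY oW; [move: (freeY W) | move: (freeCY W)]; rewrite WY oW.
Qed.

End Reduction.

Theorem mainTheorem8 (T : finType) (m : T -> T -> nat) (d r : nat) (s : T) :
  multigraph m ->
  ~~ odd #|T| -> (4 <= #|T|)%N -> (2 <= d)%N ->
  (deg [set: T] m s <= d)%N ->
  (forall v, v != s -> deg [set: T] m v = d \/ deg [set: T] m v = d.+1) ->
  nb_deg [set: T] m d.+1 = r -> (r <= d)%N ->
  (exists R : {set T}, [/\ R \proper [set: T] :\ s, odd #|R|, (3 <= #|R|)%N,
      (bnd [set: T] m R <= d)%N &
      (slack R m d <= slack ([set: T] :\ s) m d)%R]) ->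
  (Gam [set: T] m <= (d.+1)%:R)%R ->
  exists S : {set T}, [/\ odd #|S|, (1 < #|S|)%N, (#|S| < #|T|.-1)%N,
    [/\ (maxdeg (shrinkV S) (shrinkM S m) <= d.+1)%N,
        (Gam (shrinkV S) (shrinkM S m) <= (d.+1)%:R)%R &
        (nb_deg (shrinkV S) (shrinkM S m) d.+1 <= r)%N] &
    [/\ (maxdeg (shrinkV (~: S)) (shrinkM (~: S) m) <= d.+1)%N,
        (Gam (shrinkV (~: S)) (shrinkM (~: S) m) <= (d.+1)%:R)%R &
        (nb_deg (shrinkV (~: S)) (shrinkM (~: S) m) d.+1 <= r)%N]].
Proof.
move=> mg evenT _ _ deg_s deg_v <- _ [R [RVs oR R3 bndR slR]] GamT.
have deg_le v : (deg [set: T] m v <= d.+1)%N.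
  by have [->|/deg_v[]->//] := eqVneq v s; apply: leqW.
have deg_ge v : v != s -> (d <= deg [set: T] m v)%N by move/deg_v => [|] ->.
rewrite setTD in RVs slR; rewrite bnd_setT in bndR.
have cR : candidate m d s R by split=> //; apply: slack_le_nat.
have [S [[SVs oS S2 cutS _] freeS freeCS]] :=
  candidate_overfull_free mg deg_le deg_ge evenT cR.
have cutCS : (cross m (~: S) (~: ~: S) <= d)%N by rewrite setCK cross_sym.
exists S; split.
- exact: oS.
- exact: ltnW.
- by rewrite -(cardsC1 s) proper_card.
- exact: shrink_bounded_overfull_free.
- exact: shrink_bounded_overfull_free.
Qed.
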